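(* Let $Y$, $\Phi$, $A$, $f$, $k$, $R$ and $A_k=R(A)$ be as in the standing setup (in particular $R$ is one-to-one on $A$), and let $E:\mathbb{R}^k\to Y$ be a continuous map with $E(R(u))=u$ for all $u\in A$ and $R(E(x))=x$ for all $x\in A_k$. Assume moreover that $A$ is attracting with respect to an open neighborhood $U\supset A$, in the sense that for every bounded set $V\subset U$ one has $\sup_{v\in V}\operatorname{dist}(\Phi^m(v),A)\to0$ as $m\to\infty$. Let $Q\subset\mathbb{R}^k$ be compact with $A_k\subset Q$ and $E(Q)\subset U$. For $m\ge1$ let $\varphi_m=R\circ\Phi^m\circ E$, let $A_Q^m=\bigcap_{j\ge0}\varphi_m^j(Q)$, and let $A_Q^\infty=\bigcap_{m\ge1}A_Q^m$. Then $A_k=A_Q^\infty$.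
   Context: Standing setup: $Y$ is a Banach space, $\Phi:Y\to Y$ is Lipschitz continuous, $A\subset Y$ is compact with $\Phi(A)=A$, $f:Y\to\mathbb{R}$ is Lipschitz, $k\ge1$ is an integer, and $R:Y\to\mathbb{R}^k$ is $R(u)=(f(u),f(\Phi(u)),\ldots,f(\Phi^{k-1}(u)))^T$. $\Phi^m$ denotes the $m$-fold composition of $\Phi$. $\varphi_m^j(Q)$ is the image of $Q$ under the $j$-fold composition of $\varphi_m$, with $\varphi_m^0(Q)=Q$. $\operatorname{dist}(v,A)=\inf_{a\in A}\|v-a\|_Y$. *)

From Stdlib Require Import Reals Lra List.
From Stdlib Require Fin.
Open Scope R_scope.

Record Banach := {
  BS :> Type;
  bzero : BS;
  badd : BS -> BS -> BS;
  bopp : BS -> BS;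
  bscal : R -> BS -> BS;
  bnorm : BS -> R;
  badd_assoc : forall x y z, badd x (badd y z) = badd (badd x y) z;
  badd_comm : forall x y, badd x y = badd y x;
  badd_0 : forall x, badd x bzero = x;
  badd_opp : forall x, badd x (bopp x) = bzero;
  bscal_1 : forall x, bscal 1 x = x;
  bscal_assoc : forall a b x, bscal a (bscal b x) = bscal (a * b) x;
  bscal_distr_r : forall a b x, bscal (a + b) x = badd (bscal a x) (bscal b x);
  bscal_distr_l : forall a x y, bscal a (badd x y) = badd (bscal a x) (bscal a y);
  bnorm_eq0 : forall x, bnorm x = 0 -> x = bzero;
  bnorm_scal : forall a x, bnorm (bscal a x) = Rabs a * bnorm x;
  bnorm_triangle : forall x y, bnorm (badd x y) <= bnorm x + bnorm y;
  bcomplete : forall u : nat -> BS,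
    (forall eps, eps > 0 -> exists N, forall n m, (n >= N)%nat -> (m >= N)%nat ->
        bnorm (badd (u n) (bopp (u m))) < eps) ->
    exists l, forall eps, eps > 0 -> exists N, forall n, (n >= N)%nat ->
        bnorm (badd (u n) (bopp l)) < eps
}.

Arguments bnorm {_}.
Arguments badd {_}.
Arguments bopp {_}.

Definition bdist {Y : Banach} (x y : Y) : R := bnorm (badd x (bopp y)).

Definition Rk (k : nat) := Fin.t k -> R.

Definition lipschitz {Y : Banach} (g : Y -> Y) : Prop :=
  exists L, forall u v, bdist (g u) (g v) <= L * bdist u v.

Definition lipschitz_real {Y : Banach} (g : Y -> R) : Prop :=
  exists L, forall u v, Rabs (g u - g v) <= L * bdist u v.

Definition open_Y {Y : Banach} (O : Y -> Prop) : Prop :=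
  forall x, O x -> exists r, r > 0 /\ forall y, bdist y x < r -> O y.

Definition open_Rk {k : nat} (O : Rk k -> Prop) : Prop :=
  forall x, O x -> exists r, r > 0 /\
    forall y : Rk k, (forall i, Rabs (y i - x i) < r) -> O y.

Definition compact_Y {Y : Banach} (A : Y -> Prop) : Prop :=
  forall (I : Type) (C : I -> Y -> Prop), (forall i, open_Y (C i)) ->
    (forall x, A x -> exists i, C i x) ->
    exists l : list I, forall x, A x -> exists i, In i l /\ C i x.

Definition compact_Rk {k : nat} (A : Rk k -> Prop) : Prop :=
  forall (I : Type) (C : I -> Rk k -> Prop), (forall i, open_Rk (C i)) ->
    (forall x, A x -> exists i, C i x) ->
    exists l : list I, forall x, A x -> exists i, In i l /\ C i x.

Definition continuous_Rk_Y {k : nat} {Y : Banach} (E : Rk k -> Y) : Prop :=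
  forall x eps, eps > 0 -> exists delta, delta > 0 /\
    forall y : Rk k, (forall i, Rabs (y i - x i) < delta) -> bdist (E y) (E x) < eps.

Definition bounded_Y {Y : Banach} (V : Y -> Prop) : Prop :=
  exists C, forall v, V v -> bnorm v <= C.

(* dist(x, A) <= r, i.e. inf_{a in A} ||x - a|| <= r (written out). *)
Definition dist_le {Y : Banach} (x : Y) (A : Y -> Prop) (r : R) : Prop :=
  forall d, d > 0 -> exists a, A a /\ bdist x a < r + d.

Definition iter {T : Type} (m : nat) (g : T -> T) : T -> T := fun x => Nat.iter m g x.

Definition delay {Y : Banach} (k : nat) (Phi : Y -> Y) (f : Y -> R) (u : Y) : Rk k :=
  fun i => f (iter (proj1_sig (Fin.to_nat i)) Phi u).

Definition img {S T : Type} (g : S -> T) (P : S -> Prop) : T -> Prop :=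
  fun y => exists x, P x /\ g x = y.

(** If [x = R a] with [a] in [A], surjectivity of [Phi^m] on [A] and [E (R u) = u]
    put [x] back into every [phi_m^j(Q)]. Conversely, if [x] is not in [A_k],
    compactness of [A] and the Lipschitz continuity of [R] give a uniform margin
    [r0 > 0] between [x] and every [R a]. Since [E(Q)] is bounded and attracted to
    [A], for large [m] every point of [phi_m(Q) = R(Phi^m(E(Q)))] lies closer than
    [r0] to some [R a], so [x] is not in [phi_m(Q)]. *)

From Stdlib Require Import Reals.
From Stdlib Require Import Lra Lia List Classical FunctionalExtensionality.
Open Scope R_scope.

Section BanachFacts.

Variable Y : Banach.

Lemma bscal_0 (x : Y) : bscal Y 0 x = bzero Y.
Proof.
  assert (Hdouble : bscal Y 0 x = badd (bscal Y 0 x) (bscal Y 0 x)).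
  { rewrite <- bscal_distr_r. f_equal. ring. }
  rewrite <- (badd_opp _ (bscal Y 0 x)).
  rewrite Hdouble at 2.
  rewrite <- badd_assoc, badd_opp, badd_0. reflexivity.
Qed.

Lemma bnorm_zero : bnorm (bzero Y) = 0.
Proof. rewrite <- (bscal_0 (bzero Y)), bnorm_scal, Rabs_R0. ring. Qed.

Lemma bopp_scal_m1 (x : Y) : bopp x = bscal Y (-1) x.
Proof.
  assert (Hinv : badd x (bscal Y (-1) x) = bzero Y).
  { rewrite <- (bscal_1 _ x) at 1. rewrite <- bscal_distr_r.
    replace (1 + -1) with 0 by ring. apply bscal_0. }
  rewrite <- (badd_0 _ (bopp x)), <- Hinv, badd_assoc, (badd_comm _ (bopp x) x),
    badd_opp, badd_comm, badd_0. reflexivity.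
Qed.

Lemma bnorm_opp (x : Y) : bnorm (bopp x) = bnorm x.
Proof.
  rewrite bopp_scal_m1, bnorm_scal, Rabs_left by lra. ring.
Qed.

Lemma bnorm_ge0 (x : Y) : 0 <= bnorm x.
Proof.
  pose proof (bnorm_triangle _ x (bopp x)) as Htri.
  rewrite badd_opp, bnorm_zero, bnorm_opp in Htri. lra.
Qed.

Lemma bdist_ge0 (x y : Y) : 0 <= bdist x y.
Proof. apply bnorm_ge0. Qed.

Lemma bnorm_le_bdist (x y : Y) : bnorm x <= bdist x y + bnorm y.
Proof.
  pose proof (bnorm_triangle _ (badd x (bopp y)) y) as Htri.
  rewrite <- badd_assoc, (badd_comm _ (bopp y) y), badd_opp, badd_0 in Htri.
  exact Htri.
Qed.

Lemma open_Y_gt_lipschitz (g : Y -> R) (K r : R) : 0 <= K ->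
  (forall u v, Rabs (g u - g v) <= K * bdist u v) ->
  open_Y (fun y => r < g y).
Proof.
  intros HK Hg x Hx. exists ((g x - r) / (K + 1)). split.
  - apply Rdiv_lt_0_compat; lra.
  - intros y Hy.
    assert (Hclose : (K + 1) * bdist y x < g x - r).
    { apply Rmult_lt_compat_l with (r := K + 1) in Hy; [|lra].
      replace ((K + 1) * ((g x - r) / (K + 1))) with (g x - r) in Hy
        by (field; lra). exact Hy. }
    pose proof (Hg y x) as Hgyx. pose proof (Rle_abs (g x - g y)) as Habs.
    rewrite Rabs_minus_sym in Habs.
    pose proof (bdist_ge0 y x). nra.
Qed.

Lemma open_Y_exists (I : Type) (O : I -> Y -> Prop) :
  (forall i, open_Y (O i)) -> open_Y (fun y => exists i, O i y).
Proof.
  intros HO x [i Hi]. destruct (HO i x Hi) as [r [Hr Hball]].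
  exists r. split; [exact Hr|]. intros y Hy. exists i. auto.
Qed.

Lemma compact_Y_uniform_radius (A : Y -> Prop) (O : R -> Y -> Prop) :
  compact_Y A ->
  (forall r, 0 < r -> open_Y (O r)) ->
  (forall r r' y, 0 < r' <= r -> O r y -> O r' y) ->
  (forall a, A a -> exists r, 0 < r /\ O r a) ->
  exists r0, 0 < r0 /\ forall a, A a -> O r0 a.
Proof.
  intros HA Hopen Hmono Hcover.
  destruct (HA posreal (fun r => O (pos r))) as [l Hl].
  - intros r. apply Hopen, cond_pos.
  - intros a Ha. destruct (Hcover a Ha) as [r [Hr HOr]].
    exists (mkposreal r Hr). exact HOr.
  - set (r0 := fold_right (fun r acc => Rmin (pos r) acc) 1 l).
    assert (Hr0 : 0 < r0).
    { unfold r0. clear -l. induction l as [|r l IH]; simpl; [lra|].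
      apply Rmin_pos; [apply cond_pos|exact IH]. }
    assert (Hmin : forall r, In r l -> r0 <= pos r).
    { unfold r0. clear -l. induction l as [|r' l IH]; simpl; [tauto|].
      intros r [<-|Hin]; [apply Rmin_l|].
      eapply Rle_trans; [apply Rmin_r|auto]. }
    exists r0. split; [exact Hr0|]. intros a Ha.
    destruct (Hl a Ha) as [r [Hin HOr]].
    apply Hmono with (pos r); [split; [exact Hr0|auto]|exact HOr].
Qed.

End BanachFacts.

Lemma iter_surj_on {T : Type} (g : T -> T) (A : T -> Prop) :
  (forall a, A a -> exists u, A u /\ g u = a) ->
  forall m a, A a -> exists u, A u /\ iter m g u = a.
Proof.
  intros Hsurj m. induction m as [|m IH]; intros a Ha.
  - exists a. split; [exact Ha|reflexivity].
  - destruct (Hsurj a Ha) as [b [Hb <-]].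
    destruct (IH b Hb) as [u [Hu <-]].
    exists u. split; [exact Hu|reflexivity].
Qed.

Lemma iter_lipschitz_pow (Y : Banach) (g : Y -> Y) (L : R) : 0 <= L ->
  (forall u v, bdist (g u) (g v) <= L * bdist u v) ->
  forall n u v, bdist (iter n g u) (iter n g v) <= L ^ n * bdist u v.
Proof.
  intros HL Hg n. induction n as [|n IH]; intros u v; simpl.
  - lra.
  - eapply Rle_trans; [apply Hg|]. rewrite Rmult_assoc.
    apply Rmult_le_compat_l; [exact HL|apply IH].
Qed.

Lemma delay_coord_lipschitz (Y : Banach) (Phi : Y -> Y) (f : Y -> R) (k : nat) :
  lipschitz Phi -> lipschitz_real f ->
  exists K, 0 <= K /\ forall i u v,
    Rabs (delay k Phi f u i - delay k Phi f v i) <= K * bdist u v.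
Proof.
  intros [L HL] [Lf Hf].
  set (B := Rmax L 1). set (Lf' := Rmax Lf 0).
  assert (HB : 1 <= B) by apply Rmax_r.
  assert (HLf' : 0 <= Lf') by apply Rmax_r.
  assert (HPhi : forall u v, bdist (Phi u) (Phi v) <= B * bdist u v).
  { intros u v. eapply Rle_trans; [apply HL|].
    apply Rmult_le_compat_r; [apply bdist_ge0|apply Rmax_l]. }
  exists (Lf' * B ^ k). split.
  { apply Rmult_le_pos; [exact HLf'|apply pow_le; lra]. }
  intros i u v. unfold delay. destruct (Fin.to_nat i) as [n Hn]. simpl.
  set (d := bdist (iter n Phi u) (iter n Phi v)).
  assert (Hd : d <= B ^ k * bdist u v).
  { eapply Rle_trans; [apply (iter_lipschitz_pow Y Phi B); [lra|exact HPhi]|].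
    apply Rmult_le_compat_r; [apply bdist_ge0|apply Rle_pow; [exact HB|lia]]. }
  eapply Rle_trans; [apply Hf|]. fold d. rewrite Rmult_assoc.
  assert (0 <= d) by apply bdist_ge0.
  apply Rle_trans with (Lf' * d).
  - apply Rmult_le_compat_r; [lra|apply Rmax_l].
  - apply Rmult_le_compat_l; [exact HLf'|exact Hd].
Qed.

Lemma compact_Rk_bounded_image (Y : Banach) (k : nat) (E : Rk k -> Y)
  (Q : Rk k -> Prop) :
  compact_Rk Q -> continuous_Rk_Y E -> bounded_Y (img E Q).
Proof.
  intros HQ HE.
  destruct (HQ R (fun r z => bnorm (E z) < r)) as [l Hl].
  - intros r z Hz. destruct (HE z (r - bnorm (E z))) as [d [Hd Hball]]; [lra|].
    exists d. split; [exact Hd|]. intros y Hy. specialize (Hball y Hy).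
    pose proof (bnorm_le_bdist Y (E y) (E z)). lra.
  - intros z _. exists (bnorm (E z) + 1). lra.
  - exists (fold_right Rmax 0 l). intros v [z [Hz <-]].
    destruct (Hl z Hz) as [r [Hin Hr]].
    enough (r <= fold_right Rmax 0 l) by lra.
    clear -Hin. induction l as [|r' l IH]; simpl in *; [tauto|].
    destruct Hin as [<-|Hin]; [apply Rmax_l|].
    eapply Rle_trans; [apply IH, Hin|apply Rmax_r].
Qed.

Section DelayReconstruction.

Variables (Y : Banach) (Phi : Y -> Y) (A : Y -> Prop) (f : Y -> R) (k : nat).
Variables (E : Rk k -> Y) (U : Y -> Prop) (Q : Rk k -> Prop).

Local Notation Rd := (delay k Phi f).
Local Notation phi m := (fun z => Rd (iter m Phi (E z))).

Hypothesis Phi_lipschitz : lipschitz Phi.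
Hypothesis f_lipschitz : lipschitz_real f.
Hypothesis A_compact : compact_Y A.
Hypothesis Phi_onto_A : forall a, A a -> exists u, A u /\ Phi u = a.
Hypothesis E_delay : forall u, A u -> E (Rd u) = u.
Hypothesis E_continuous : continuous_Rk_Y E.
Hypothesis A_attracts_U : forall V : Y -> Prop, bounded_Y V -> (forall v, V v -> U v) ->
  forall eps, eps > 0 -> exists M, forall m, (m >= M)%nat ->
    forall v, V v -> dist_le (iter m Phi v) A eps.
Hypothesis Q_compact : compact_Rk Q.
Hypothesis delay_A_in_Q : forall x, img Rd A x -> Q x.
Hypothesis E_Q_in_U : forall x, Q x -> U (E x).

Lemma delay_image_sub_iter_img m j x : img Rd A x -> iter j (img (phi m)) Q x.
Proof.
  intros [a [Ha <-]]. revert a Ha. induction j as [|j IH]; intros a Ha.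
  - apply delay_A_in_Q. exists a. split; [exact Ha|reflexivity].
  - destruct (iter_surj_on Phi A Phi_onto_A m a Ha) as [b [Hb <-]].
    exists (Rd b). split; [apply IH, Hb|].
    cbv beta. rewrite (E_delay b Hb). reflexivity.
Qed.

Lemma delay_image_margin x : ~ img Rd A x ->
  exists r0, 0 < r0 /\ forall a, A a -> exists i, r0 < Rabs (Rd a i - x i).
Proof.
  intros Hx.
  destruct (delay_coord_lipschitz Y Phi f k Phi_lipschitz f_lipschitz) as [K [HK HRd]].
  apply (compact_Y_uniform_radius Y A
           (fun r y => exists i, r < Rabs (Rd y i - x i)) A_compact).
  - intros r _. apply open_Y_exists. intros i.
    apply (open_Y_gt_lipschitz Y _ K r HK). intros u v.
    eapply Rle_trans; [apply Rabs_triang_inv2|].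
    replace (Rd u i - x i - (Rd v i - x i)) with (Rd u i - Rd v i) by ring.
    apply HRd.
  - intros r r' y Hr [i Hi]. exists i. lra.
  - intros a Ha.
    assert (Hne : exists i, Rd a i <> x i).
    { apply NNPP. intros Hall. apply Hx. exists a. split; [exact Ha|].
      apply functional_extensionality. intros i.
      apply NNPP. intros Hi. apply Hall. exists i. exact Hi. }
    destruct Hne as [i Hi].
    assert (0 < Rabs (Rd a i - x i)) by (apply Rabs_pos_lt; lra).
    exists (Rabs (Rd a i - x i) / 2). split; [lra|]. exists i. lra.
Qed.

Lemma img_phi_sub_delay_image x :
  (forall m, (1 <= m)%nat -> img (phi m) Q x) -> img Rd A x.
Proof.
  intros Hx. apply NNPP. intros Hn.
  destruct (delay_image_margin x Hn) as [r0 [Hr0 Hsep]].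
  destruct (delay_coord_lipschitz Y Phi f k Phi_lipschitz f_lipschitz) as [K [HK HRd]].
  set (eps := r0 / (2 * (K + 1))).
  assert (Heps : eps > 0) by (apply Rdiv_lt_0_compat; lra).
  assert (HEQ : forall v, img E Q v -> U v).
  { intros v [z [Hz <-]]. apply E_Q_in_U, Hz. }
  destruct (A_attracts_U (img E Q)
              (compact_Rk_bounded_image Y k E Q Q_compact E_continuous) HEQ eps Heps)
    as [M HM].
  destruct (Hx (S M) ltac:(lia)) as [z [Hz Hzx]].
  destruct (HM (S M) ltac:(lia) (E z) (ex_intro _ z (conj Hz eq_refl)) eps Heps)
    as [a [Ha Hclose]].
  destruct (Hsep a Ha) as [i Hi].
  rewrite <- Hzx, Rabs_minus_sym in Hi.
  set (p := iter (S M) Phi (E z)) in *.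
  pose proof (HRd i p a) as Hlip. pose proof (bdist_ge0 Y p a).
  assert (Hfar : (K + 1) * bdist p a < r0).
  { replace r0 with ((K + 1) * (eps + eps)) by (unfold eps; field; lra).
    apply Rmult_lt_compat_l; lra. }
  nra.
Qed.

End DelayReconstruction.

Theorem mainTheorem8 (Y : Banach) (Phi : Y -> Y) (A : Y -> Prop) (f : Y -> R)
  (k : nat) (E : Rk k -> Y) (U : Y -> Prop) (Q : Rk k -> Prop) :
  lipschitz Phi ->
  compact_Y A ->
  (forall u, A u -> A (Phi u)) ->
  (forall a, A a -> exists u, A u /\ Phi u = a) ->
  lipschitz_real f ->
  (1 <= k)%nat ->
  (forall u v, A u -> A v -> delay k Phi f u = delay k Phi f v -> u = v) ->
  continuous_Rk_Y E ->
  (forall u, A u -> E (delay k Phi f u) = u) ->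
  (forall x, img (delay k Phi f) A x -> delay k Phi f (E x) = x) ->
  open_Y U ->
  (forall u, A u -> U u) ->
  (forall V : Y -> Prop, bounded_Y V -> (forall v, V v -> U v) ->
     forall eps, eps > 0 -> exists M, forall m, (m >= M)%nat ->
       forall v, V v -> dist_le (iter m Phi v) A eps) ->
  compact_Rk Q ->
  (forall x, img (delay k Phi f) A x -> Q x) ->
  (forall x, Q x -> U (E x)) ->
  forall x : Rk k,
    img (delay k Phi f) A x <->
    (forall m, (1 <= m)%nat -> forall j,
       iter j (img (fun z => delay k Phi f (iter m Phi (E z)))) Q x).
Proof.
  intros HPhi HA _ Honto Hf _ _ HEc HE _ _ _ Hatt HQ HAQ HQU x. split.
  - intros Hx m _ j.
    exact (delay_image_sub_iter_img Y Phi A f k E Q Honto HE HAQ m j x Hx).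
  - intros Hx.
    apply (img_phi_sub_delay_image Y Phi A f k E U Q HPhi Hf HA HEc Hatt HQ HQU).
    intros m Hm. exact (Hx m Hm 1%nat).
Qed.
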